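(* Let $S=\{1,\ldots,K\}$, $K>1$, let $T\ge 1$, and let $p$ be the distribution of any first order Markov chain on $S^T$ (for a path $s^T=(s_1,\ldots,s_T)\in S^T$ and $1\le m\le n\le T$, $p(s_m^n)$ denotes the marginal probability that the chain takes values $(s_m,\ldots,s_n)$ at times $m,\ldots,n$). For a positive integer $k\le T$ define $$\bar U_k(s^T):=\prod_{j=1-k}^{T-1}p\big(s_{(j+1)\vee 1}^{(j+k)\wedge T}\big),\qquad \bar R_k(s^T):=-\frac{1}{T}\ln \bar U_k(s^T),$$ and $\bar R_\infty(s^T):=-\frac{1}{T}\log p(s^T)$. Let $k$ be such that $T\geq k>1$. Then $$\bar R_k(s^T)=\bar R_{\infty}(s^T)+\bar R_{k-1}(s^T)\quad\text{for all } s^T\in S^T.$$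
   Context: Here $a\vee b=\max\{a,b\}$ and $a\wedge b=\min\{a,b\}$. For $k=1$, $\bar R_1(s^T)=-\frac1T\sum_{t=1}^T\log p(s_t)$ (log-pseudo-likelihood risk). Equivalently, $\bar U_k(s^T)=p(s^T)\,\bar U_{k-1}(s^T)$. *)

From HB Require Import structures.
From mathcomp Require Import all_boot all_order all_algebra.
From mathcomp Require Import reals constructive_ereal exp.
Set Implicit Arguments. Unset Strict Implicit. Unset Printing Implicit Defensive.
Import Order.TTheory GRing.Theory Num.Theory.
Local Open Scope ring_scope.

(* Paths s^T in S^T with S = {1..K} represented by 'I_K (state i+1 <-> i),
   time t in {1..T} represented by the ordinal t-1 : 'I_T. *)
Definition spath (K T : nat) := {ffun 'I_T -> 'I_K}.

Definition is_distribution (R : realType) K T (p : spath K T -> R) : Prop :=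
  (forall x, 0 <= p x) /\ \sum_(x : spath K T) p x = 1.

Definition marg (R : realType) K T (p : spath K T -> R) (s : spath K T) (m n : nat) : R :=
  \sum_(x : spath K T | [forall i : 'I_T, ((m <= i.+1 <= n)%N) ==> (x i == s i)]) p x.

(* first-order Markov property: for 1 <= t < T and every path x,
   P(X_{t+1}=x_{t+1} | X_1^t = x_1^t) = P(X_{t+1}=x_{t+1} | X_t = x_t),
   written multiplicatively (so that it is meaningful for null events):
   p(x_1^{t+1}) p(x_t) = p(x_1^t) p(x_t^{t+1}). *)
Definition is_markov (R : realType) K T (p : spath K T -> R) : Prop :=
  forall (x : spath K T) (t : nat), (1 <= t)%N -> (t < T)%N ->
    marg p x 1 t.+1 * marg p x t t = marg p x 1 t * marg p x t t.+1.

(* \bar U_k(s^T) = prod_{j=1-k}^{T-1} p(s_{(j+1) v 1}^{(j+k) ^ T}),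
   reindexed by i = j + k, i = 1, ..., T+k-1 *)
Definition Ubar (R : realType) K T (p : spath K T -> R) (k : nat) (s : spath K T) : R :=
  \prod_(1 <= i < T + k) marg p s (maxn (i.+1 - k) 1) (minn i T).

Definition negloglik (R : realType) (T : nat) (u : R) : \bar R :=
  if u == 0 then +oo%E else (- (T%:R^-1 * ln u))%:E.

Definition Rbar_k (R : realType) K T (p : spath K T -> R) (k : nat) (s : spath K T) : \bar R :=
  negloglik T (Ubar p k s).

Definition Rbar_inf (R : realType) K T (p : spath K T -> R) (s : spath K T) : \bar R :=
  negloglik T (p s).

From HB Require Import structures.
From mathcomp Require Import all_boot all_order all_algebra.
From mathcomp Require Import reals constructive_ereal exp.
From mathcomp Require Import zify ring.
Set Implicit Arguments. Unset Strict Implicit. Unset Printing Implicit Defensive.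
Import Order.TTheory GRing.Theory Num.Theory.
Local Open Scope ring_scope.

(* If all one-time marginals p(s_t) are positive, the Markov property gives
   p(s_{a-1}^b) = p(s_a^b) p(s_{a-1} | s_a), so lengthening each window of
   U_{k-1} by one step to the left multiplies U_{k-1} by the backward
   transitions p(s_{j-1} | s_j), j = 2..T; the one extra window of U_k is
   {T}, and p(s_T) prod_j p(s_{j-1} | s_j) = p(s^T).  If some p(s_t)
   vanishes, so does every window through t, hence U_k and U_{k-1}.
   The Markov property is only assumed for prefixes s_1^t; it extends to
   windows s_a^t by summing over s_1^{a-1}. *)

Section Marginals.
Variables (R : realType) (K T : nat) (p : spath K T -> R).
Hypothesis p_ge0 : forall x, 0 <= p x.

Definition agree_on (x y : spath K T) (m n : nat) :=
  [forall i : 'I_T, ((m <= i.+1 <= n)%N) ==> (x i == y i)].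

Lemma marg_ge0 (s : spath K T) m n : 0 <= marg p s m n.
Proof. exact: sumr_ge0. Qed.

Lemma marg_le_subwindow (s : spath K T) m n c d :
  (m <= c)%N -> (d <= n)%N -> marg p s m n <= marg p s c d.
Proof.
move=> m_le_c d_le_n.
rewrite /marg [X in X <= _]big_mkcond [X in _ <= X]big_mkcond.
apply: ler_sum => x _; case: ifP => [/forallP x_agree|_]; last by case: ifP.
rewrite ifT //; apply/forallP => i; apply/implyP => hi.
by apply: (implyP (x_agree i)); lia.
Qed.

Lemma marg_whole (s : spath K T) : marg p s 1 T = p s.
Proof.
rewrite /marg (big_pred1 s) // => x /=; apply/forallP/eqP => [x_agree|-> i].
- by apply/ffunP => i; apply/eqP; apply: (implyP (x_agree i)); rewrite /=.
- exact/implyP.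
Qed.

Lemma marg_agree (s z : spath K T) a m n :
  agree_on z s a T -> (a <= m)%N -> marg p z m n = marg p s m n.
Proof.
move=> /forallP z_agree a_le_m; apply: eq_bigl => x; apply: eq_forallb => i.
case i_in: (m <= i.+1 <= n)%N => //=.
have /implyP/(_ _)/eqP -> // := z_agree i.
by have := ltn_ord i; lia.
Qed.

Lemma marg_total (s : spath K T) a b : (a <= b.+1)%N ->
  marg p s a b = \sum_(z | agree_on z s a T) marg p z 1 b.
Proof.
move=> a_le_b1; rewrite /marg.
under [RHS]eq_bigr do rewrite big_mkcond.
rewrite exchange_big /= [LHS]big_mkcond /=.
apply: eq_bigr => x _; rewrite -big_mkcondr /=.
case x_agree: [forall i : 'I_T, ((a <= i.+1 <= b)%N) ==> (x i == s i)].
- (* the only path that agrees with s from time a on and with x before *)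
  pose z0 := [ffun i : 'I_T => if (i.+1 < a)%N then x i else s i].
  rewrite (big_pred1 z0) // => z /=; apply/idP/idP.
  + case/andP=> /forallP z_s /forallP x_z; apply/eqP/ffunP => i.
    rewrite ffunE; case: ifP => hi.
    * by apply/esym/eqP; move: (x_z i); rewrite /= (_ : (i < b)%N) //; lia.
    * apply/eqP; move: (z_s i); rewrite (_ : (a <= i.+1 <= T)%N) //.
      by have := ltn_ord i; lia.
  + move/eqP=> ->; apply/andP; split; apply/forallP => i; apply/implyP => hi.
    * by rewrite ffunE ifN //; lia.
    * rewrite ffunE; case: ifP => // i_ge_a.
      by move/forallP: x_agree => /(_ i) /implyP; apply; lia.
- rewrite big1 // => z /andP [/forallP z_s /forallP x_z].
  move/negbT: x_agree => /negP; case; apply/forallP => i; apply/implyP => hi.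
  move: (x_z i) (z_s i); rewrite (_ : (i < b)%N); last by lia.
  rewrite (_ : (a <= i.+1 <= T)%N); last by have := ltn_ord i; lia.
  by move=> /eqP -> /eqP ->.
Qed.

Lemma markov_window (s : spath K T) a t : is_markov p ->
  (1 <= a <= t)%N -> (t < T)%N ->
  marg p s a t.+1 * marg p s t t = marg p s a t * marg p s t t.+1.
Proof.
move=> p_markov a_le_t t_lt_T.
rewrite (@marg_total s a t.+1) ?(@marg_total s a t); try lia.
rewrite !mulr_suml; apply: eq_bigr => z z_agree.
rewrite -(marg_agree t z_agree) -?(marg_agree t.+1 z_agree); try lia.
by apply: p_markov; lia.
Qed.

Lemma marg_eq0_of_marg1 (s : spath K T) t m n :
  marg p s t t = 0 -> (m <= t <= n)%N -> marg p s m n = 0.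
Proof.
move=> st0 t_in; apply/eqP; rewrite eq_le marg_ge0 andbT -st0.
by apply: marg_le_subwindow; lia.
Qed.

Lemma Ubar_ge0 k (s : spath K T) : 0 <= Ubar p k s.
Proof. apply: prodr_ge0 => i _; apply: marg_ge0. Qed.

Lemma Ubar_eq0_of_marg1 k (s : spath K T) t :
  (1 <= k)%N -> (1 <= t <= T)%N -> marg p s t t = 0 -> Ubar p k s = 0.
Proof.
move=> k_ge1 t_in st0; apply/eqP; rewrite prodf_seq_eq0.
apply/hasP; exists t; first by rewrite mem_index_iota; lia.
by rewrite /= (marg_eq0_of_marg1 st0) ?eqxx //; lia.
Qed.

End Marginals.

Section MarkovFactorization.
Variables (R : realType) (K T : nat) (p : spath K T -> R) (s : spath K T).
Hypothesis p_markov : is_markov p.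
Hypothesis marg1_neq0 : forall t, (1 <= t <= T)%N -> marg p s t t != 0.
Local Notation W := (marg p s).

Definition back_trans a := W a.-1 a / W a a.

Lemma marg_extend_right a b : (1 <= a <= b)%N -> (b < T)%N ->
  W a b.+1 = W a b * (W b b.+1 / W b b).
Proof.
move=> a_le_b b_lt_T; have Wbb_neq0 : W b b != 0 by apply: marg1_neq0; lia.
by rewrite mulrA -markov_window // mulfK.
Qed.

Lemma marg_extend_left a b : (2 <= a <= b)%N -> (b <= T)%N ->
  W a.-1 b = W a b * back_trans a.
Proof.
elim: b => [|b IH] a_le_b b_le_T; first by lia.
have [<-|a_le_b'] := eqVneq a b.+1.
  by rewrite /back_trans mulrC divfK // marg1_neq0 //; lia.
rewrite (@marg_extend_right a.-1 b) ?(@marg_extend_right a b) ?IH; try lia.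
by rewrite /back_trans; ring.
Qed.

Lemma marg_factor a b : (1 <= a <= b)%N -> (b <= T)%N ->
  W a b = W b b * \prod_(a.+1 <= j < b.+1) back_trans j.
Proof.
move=> /andP[a_ge1 a_le_b] b_le_T.
rewrite -(subKn a_le_b); have : (b - a < b)%N by lia.
elim: (b - a)%N => [|n IH] n_lt_b; first by rewrite subn0 big_geq // mulr1.
rewrite (_ : (b - n.+1 = (b - n).-1)%N); last by lia.
rewrite marg_extend_left ?IH; try lia.
rewrite prednK; last by lia.
rewrite [in RHS]big_ltn; last by lia.
by ring.
Qed.

Lemma Ubar_succ k : (1 <= k)%N -> (k < T)%N ->
  Ubar p k.+1 s = p s * Ubar p k s.
Proof.
move=> k_ge1 k_lt_T.
have window i : (1 <= i < T + k)%N ->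
    W (maxn (i.+1 - k.+1) 1) (minn i T) =
    W (maxn (i.+1 - k) 1) (minn i T) *
    (if (k < i)%N then back_trans (i - k).+1 else 1).
  move=> i_in; case: ifP => k_lt_i.
  - rewrite (_ : maxn (i.+1 - k.+1) 1 = (i - k).+1.-1)%N; last by lia.
    rewrite (_ : maxn (i.+1 - k) 1 = (i - k).+1)%N; last by lia.
    by apply: marg_extend_left; lia.
  - rewrite mulr1 (_ : maxn (i.+1 - k.+1) 1 = 1)%N; last by lia.
    by rewrite (_ : maxn (i.+1 - k) 1 = 1)%N; last by lia.
have ratios : \prod_(1 <= i < T + k)
    (if (k < i)%N then back_trans (i - k).+1 else 1) =
    \prod_(2 <= j < T.+1) back_trans j.
  rewrite (big_cat_nat _ (n := k.+1)) /=; try lia.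
  rewrite big_nat_cond big1 ?mul1r; last first.
    by move=> i /andP[/andP[_ i_le_k] _]; rewrite ifN //; lia.
  rewrite (eq_big_nat _ _ (F2 := fun i => back_trans (i - k).+1)); last first.
    by move=> i i_in; rewrite ifT //; lia.
  rewrite (_ : k.+1 = 1 + k)%N // big_addn [RHS]big_add1 /=.
  rewrite (_ : (T + k - k = T)%N); last by lia.
  by apply: eq_big_nat => i _; rewrite addnK.
have ps : p s = W T T * \prod_(2 <= j < T.+1) back_trans j.
  by rewrite -marg_whole marg_factor //; lia.
rewrite /Ubar addnS big_nat_recr /=; last by lia.
rewrite (_ : maxn ((T + k).+1 - k.+1) 1 = T)%N; last by lia.
rewrite (_ : minn (T + k) T = T)%N; last by lia.
rewrite (eq_big_nat _ _ window) big_split /= ratios ps.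
by ring.
Qed.

End MarkovFactorization.

Lemma Ubar_succ_markov (R : realType) (K T : nat) (p : spath K T -> R) k
    (s : spath K T) :
  (forall x, 0 <= p x) -> is_markov p -> (1 <= k)%N -> (k < T)%N ->
  Ubar p k.+1 s = p s * Ubar p k s.
Proof.
move=> p_ge0 p_markov k_ge1 k_lt_T.
case: (boolP [exists t : 'I_T, marg p s t.+1 t.+1 == 0]).
- case/existsP => t /eqP st0; have t_in : (1 <= t.+1 <= T)%N by rewrite ltn_ord.
  by rewrite !(Ubar_eq0_of_marg1 p_ge0 _ t_in st0) // mulr0.
- move=> /existsPn marg1_neq0; apply: Ubar_succ => // t t_in.
  have t1_lt_T : (t.-1 < T)%N by lia.
  by have := marg1_neq0 (Ordinal t1_lt_T); rewrite /= prednK //; lia.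
Qed.

Lemma negloglikM (R : realType) (T : nat) (u v : R) : 0 <= u -> 0 <= v ->
  negloglik T (u * v) = (negloglik T u + negloglik T v)%E.
Proof.
move=> u_ge0 v_ge0; rewrite /negloglik mulf_eq0.
have [->|u_neq0] := eqVneq u 0; first by rewrite /=; case: ifP.
have [->|v_neq0] := eqVneq v 0; first by [].
rewrite /= lnM ?posrE ?lt0r ?u_neq0 ?v_neq0 ?u_ge0 ?v_ge0 //.
by rewrite -EFinD mulrDr opprD.
Qed.

Theorem theorem3 (R : realType) (K T : nat) (p : spath K T -> R) (k : nat) :
  (1 < K)%N -> (1 <= T)%N ->
  is_distribution p -> is_markov p ->
  (1 < k)%N -> (k <= T)%N ->
  forall s : spath K T,
    Rbar_k p k s = (Rbar_inf p s + Rbar_k p k.-1 s)%E.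
Proof.
move=> _ _ [p_ge0 _] p_markov k_gt1 k_le_T s.
rewrite /Rbar_k /Rbar_inf -{1}(prednK (ltnW k_gt1)).
rewrite Ubar_succ_markov //; try lia.
exact: negloglikM (p_ge0 s) (Ubar_ge0 p_ge0 _ _).
Qed.
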